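(* Let $d\ge1$ and $q\ge2$ even. There exist a unique constant $C\ne0$ and a unique polynomial $p_{q+1}$ whose monomials have degrees in $\{1,3,\ldots,q+1\}$ such that $\bar p_{q+1,1}(x)=p_{q+1}(x)\mathbbm{1}_{x\le1}$ satisfies $\bar p_{q+1,1}\in\mathcal M_{d,1,q+1}$, $\int_0^\infty x^{d+q}\bar p_{q+1,1}(x)\,dx=C$, and $p_{q+1}(1)=0$. Moreover, this $\bar p_{q+1,1}$ equals $G^{B(1)}_{d,q}$, the derivative of $G^B_{d,q}$.
   Context: $B_{d,i}(g)=\int_0^\infty x^{d-1+i}g(x)dx$, $b_d=2\pi^{d/2}/\Gamma(d/2)$. $\mathcal M_{d,1,q+1}$: functions $g$ on $[0,\infty)$ with $B_{d,1}(g)=-d\,b_d^{-1}$, $B_{d,i}(g)=0$ for $i=3,5,\ldots,q-1$, and $B_{d,q+1}(g)\ne0$. $G^B_{d,q}(x)=\frac{\Gamma(\frac{d+q}{2})}{\pi^{d/2}\Gamma(\frac q2)}P^{(\frac d2,-2)}_{\frac q2+1}(1-2x^2)\mathbbm{1}_{x\le1}$, where $P^{(\alpha,\beta)}_n(x)=\frac{(-1)^n}{2^nn!}(1-x)^{-\alpha}(1+x)^{-\beta}\frac{d^n}{dx^n}[(1-x)^{n+\alpha}(1+x)^{n+\beta}]$ is the Jacobi polynomial. *)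

From Stdlib Require Import Reals Lra Lia.
From Coquelicot Require Import Coquelicot.
Open Scope R_scope.

Definition Gamma (s : R) : R :=
  RInt_gen (fun t => Rpower t (s - 1) * exp (- t)) (at_right 0) (Rbar_locally p_infty).

Definition b_ (d : nat) : R := 2 * Rpower PI (INR d / 2) / Gamma (INR d / 2).

Definition B_ (d i : nat) (g : R -> R) : R :=
  RInt_gen (fun x => x ^ (d - 1 + i) * g x) (at_point 0) (Rbar_locally p_infty).

Definition in_M (d q : nat) (g : R -> R) : Prop :=
  B_ d 1 g = - INR d / b_ d /\
  (forall i : nat, Nat.Odd i -> (3 <= i <= q - 1)%nat -> B_ d i g = 0) /\
  B_ d (q + 1) g <> 0.

Definition ind_le1 (x : R) : R := if Rle_dec x 1 then 1 else 0.

(* Jacobi polynomial via the Rodrigues formula, valid for -1 < y < 1 *)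
Definition jacobi_rod (n : nat) (a b : R) (y : R) : R :=
  (-1) ^ n / (2 ^ n * INR (Factorial.fact n)) * Rpower (1 - y) (- a) * Rpower (1 + y) (- b)
  * Derive_n (fun t => Rpower (1 - t) (INR n + a) * Rpower (1 + t) (INR n + b)) n y.

Definition jacobiP (n : nat) (a b : R) (y : R) : R :=
  if Rlt_dec (-1) y then
    if Rlt_dec y 1 then jacobi_rod n a b y
    else if Req_EM_T y 1 then
      real (Lim_seq (fun k => jacobi_rod n a b (1 - / INR (k + 2))))
    else 0
  else if Req_EM_T y (-1) then
    real (Lim_seq (fun k => jacobi_rod n a b (-1 + / INR (k + 2))))
  else 0.

Definition GB (d q : nat) (x : R) : R :=
  Gamma ((INR d + INR q) / 2) / (Rpower PI (INR d / 2) * Gamma (INR q / 2))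
  * jacobiP (q / 2 + 1) (INR d / 2) (-2) (1 - 2 * x ^ 2) * ind_le1 x.

Definition podd (q : nat) (c : nat -> R) (x : R) : R :=
  sum_f_R0 (fun k => c k * x ^ (2 * k + 1)) (q / 2).

Definition pbar (q : nat) (c : nat -> R) (x : R) : R := podd q c x * ind_le1 x.

From Stdlib Require Import Reals Lra Lia.
From Coquelicot Require Import Coquelicot.
Open Scope R_scope.

(* Write [q = 2N + 2] and [a = d/2].  For [beta = -2] Rodrigues' formula can be
   evaluated in closed form: expanding [(1 + y)^N = (2 - (1 - y))^N], one finds
   [G^B_(d,q)(x) = K (1 - x^2)^2 W(x^2)] on [[0, 1]] for an explicit polynomial
   [W], so [G^B] is differentiable also at the cut-off [x = 1] and its
   derivative is an odd polynomial [p_(q+1)] truncated at 1, with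
   [p_(q+1)(1) = 0].

   Up to the factor [-(d + 2j) K / (N+2)!], the moment [B_(d,2j+1)] of that
   derivative is the alternating binomial sum
   [sum_l (-1)^l C(N,l) (a+l+1)...(a+l+N+2) / ((a+j+l)(a+j+l+1)(a+j+l+2))].
   For [1 <= j <= N] the denominator divides the numerator, and the N-th
   difference of a polynomial of degree [N - 1] vanishes; for [j = 0] and
   [j = N + 1] the sum reduces to [sum_l (-1)^l C(N,l) / (b + l) =
   N! / (b (b+1) ... (b+N))], which gives [B_(d,1) = -d / b_d] (through
   [Gamma(a + N + 1) = Gamma(a) a (a+1) ... (a+N)]) and [B_(d,q+1) <> 0].

   Uniqueness: the [N + 1] moment conditions and [p(1) = 0] form a square
   linear system for the [N + 2] coefficients.  For a kernel vector, summation
   by parts shows that [x^(d+1) (1 - x^2) P(x)] is orthogonal on [[0, 1]] to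
   [1, x^2, ..., x^(2N)], where [P] has the partial sums of the kernel vector
   as coefficients; in particular it is orthogonal to [P], so [P = 0]. *)

Lemma sum_f_R0_succ_l (g : nat -> R) N :
  sum_f_R0 g (S N) = g O + sum_f_R0 (fun l => g (S l)) N.
Proof. induction N as [|N IH]; simpl in *; [ring | rewrite IH; ring]. Qed.

Lemma sum_f_R0_mult_l (c : R) (g : nat -> R) N :
  sum_f_R0 (fun l => c * g l) N = c * sum_f_R0 g N.
Proof. rewrite scal_sum; apply sum_eq; intros; ring. Qed.

Lemma sum_f_R0_mult_r (g : nat -> R) (c : R) N :
  sum_f_R0 g N * c = sum_f_R0 (fun l => g l * c) N.
Proof. rewrite Rmult_comm, scal_sum; reflexivity. Qed.

(** * Binomial coefficients and alternating binomial sums *)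

(* Unlike [Binomial.C], this one vanishes for [k > n], which makes index
   shifts in alternating sums painless. *)
Fixpoint binom (n k : nat) : R :=
  match n, k with
  | _, O => 1
  | O, S _ => 0
  | S n', S k' => binom n' k' + binom n' (S k')
  end.

Lemma binom_n_0 n : binom n 0 = 1.
Proof. now destruct n. Qed.

Lemma binom_gt n k : (n < k)%nat -> binom n k = 0.
Proof.
  revert k; induction n as [|n IH]; intros [|k] Hk; simpl; try lia; auto.
  rewrite !IH by lia; ring.
Qed.

Lemma binom_n_n n : binom n n = 1.
Proof. induction n as [|n IH]; simpl; [|rewrite IH, binom_gt by lia]; ring. Qed.

Lemma binom_C n k : (k <= n)%nat -> Binomial.C n k = binom n k.
Proof.
  revert k; induction n as [|n IH]; intros k Hk.
  - replace k with O by lia; apply C_n_0.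
  - destruct k as [|k]; [now rewrite C_n_0, binom_n_0|].
    destruct (Nat.eq_dec k n) as [->|Hne]; [now rewrite C_n_n, binom_n_n|].
    rewrite <- pascal by lia; simpl; rewrite !IH by lia; ring.
Qed.

Definition altsum (N : nat) (f : nat -> R) : R :=
  sum_f_R0 (fun l => binom N l * (-1) ^ l * f l) N.

Lemma altsum_ext N f g : (forall l, (l <= N)%nat -> f l = g l) -> altsum N f = altsum N g.
Proof. intros H; apply sum_eq; intros; rewrite H; auto. Qed.

Lemma altsum_plus N f g : altsum N (fun l => f l + g l) = altsum N f + altsum N g.
Proof. unfold altsum; rewrite <- sum_plus; apply sum_eq; intros; ring. Qed.

Lemma altsum_minus N f g : altsum N (fun l => f l - g l) = altsum N f - altsum N g.
Proof. unfold altsum; rewrite <- minus_sum; apply sum_eq; intros; ring. Qed.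

Lemma altsum_scal N c f : altsum N (fun l => c * f l) = c * altsum N f.
Proof. unfold altsum; rewrite <- sum_f_R0_mult_l; apply sum_eq; intros; ring. Qed.

Lemma altsum_succ N f : altsum (S N) f = altsum N f - altsum N (fun l => f (S l)).
Proof.
  unfold altsum; rewrite sum_f_R0_succ_l, binom_n_0.
  rewrite (sum_eq (fun l => binom (S N) (S l) * (-1) ^ S l * f (S l))
    (fun l => binom N (S l) * (-1) ^ S l * f (S l) - binom N l * (-1) ^ l * f (S l)))
    by (intros; simpl; ring).
  rewrite minus_sum.
  assert (Hshift := sum_f_R0_succ_l (fun l => binom N l * (-1) ^ l * f l) N).
  rewrite tech5, (binom_gt N (S N)), binom_n_0 in Hshift by lia.
  simpl in Hshift |- *; lra.
Qed.

(* [deg_lt k f]: the [k]-th forward difference of [f] vanishes, i.e. [f] is a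
   polynomial of degree [< k] on the naturals. *)
Fixpoint deg_lt (k : nat) (f : nat -> R) : Prop :=
  match k with
  | O => forall l, f l = 0
  | S k => deg_lt k (fun l => f (S l) - f l)
  end.

Lemma deg_lt_ext k f g : (forall l, f l = g l) -> deg_lt k f -> deg_lt k g.
Proof.
  revert f g; induction k as [|k IH]; simpl; intros f g E H.
  - intros l; rewrite <- E; auto.
  - eapply IH; [|exact H]; intros l; cbv beta; rewrite !E; reflexivity.
Qed.

Lemma deg_lt_plus k f g : deg_lt k f -> deg_lt k g -> deg_lt k (fun l => f l + g l).
Proof.
  revert f g; induction k as [|k IH]; simpl; intros f g Hf Hg.
  - intros l; rewrite Hf, Hg; ring.
  - eapply deg_lt_ext; [|exact (IH _ _ Hf Hg)]; intros; simpl; ring.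
Qed.

Lemma deg_lt_scal k c f : deg_lt k f -> deg_lt k (fun l => c * f l).
Proof.
  revert f; induction k as [|k IH]; simpl; intros f Hf.
  - intros l; rewrite Hf; ring.
  - eapply deg_lt_ext; [|exact (IH _ Hf)]; intros; simpl; ring.
Qed.

Lemma deg_lt_shift k f : deg_lt k f -> deg_lt k (fun l => f (S l)).
Proof.
  revert f; induction k as [|k IH]; simpl; intros f Hf; [auto | apply (IH _ Hf)].
Qed.

Lemma deg_lt_S k f : deg_lt k f -> deg_lt (S k) f.
Proof.
  revert f; induction k as [|k IH]; intros f Hf.
  - simpl in *; intros l; rewrite !Hf; ring.
  - apply IH; exact Hf.
Qed.

Lemma deg_lt_const c : deg_lt 1 (fun _ => c).
Proof. simpl; intros; ring. Qed.

Lemma deg_lt_mul_linear k c f : deg_lt k f -> deg_lt (S k) (fun l => (c + INR l) * f l).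
Proof.
  revert f c; induction k as [|k IH]; intros f c Hf.
  - simpl in *; intros l; rewrite !Hf; ring.
  - change (deg_lt (S k) (fun l => (c + INR (S l)) * f (S l) - (c + INR l) * f l)).
    refine (deg_lt_ext _ _ _ _ (deg_lt_plus _ _ _ (IH _ c Hf) (deg_lt_shift _ _ Hf))).
    intros l; rewrite S_INR; ring.
Qed.

Lemma altsum_deg_lt N f : deg_lt N f -> altsum N f = 0.
Proof.
  revert f; induction N as [|N IH]; intros f Hf.
  - unfold altsum; simpl; rewrite Hf; ring.
  - rewrite altsum_succ; apply IH in Hf; rewrite altsum_minus in Hf; lra.
Qed.

(* [rising y k = (y + 1) (y + 2) ... (y + k)], the Pochhammer symbol [(y + 1)_k]. *)
Fixpoint rising (y : R) (k : nat) : R :=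
  match k with O => 1 | S k' => rising y k' * (y + INR (S k')) end.

Lemma rising_add y p r : rising y (p + r) = rising y p * rising (y + INR p) r.
Proof.
  induction r as [|r IH]; [rewrite Nat.add_0_r; simpl; ring|].
  rewrite Nat.add_succ_r; cbn [rising]; rewrite IH, !S_INR, plus_INR; ring.
Qed.

Lemma rising_succ_l y N : rising y (S N) = (y + 1) * rising (y + 1) N.
Proof.
  induction N as [|N IH]; [simpl; ring|].
  change (rising y (S N) * (y + INR (S (S N))) = (y + 1) * (rising (y + 1) N * (y + 1 + INR (S N)))).
  rewrite IH, (S_INR (S N)); ring.
Qed.

Lemma rising_pos y N : 0 < y -> 0 < rising y N.
Proof.
  intros Hy; induction N as [|N IH]; cbn [rising]; [lra|].
  pose proof (pos_INR (S N)); apply Rmult_lt_0_compat; lra.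
Qed.

Lemma rising_neq0 y N : (forall t, (1 <= t <= N)%nat -> y + INR t <> 0) -> rising y N <> 0.
Proof.
  induction N as [|N IH]; intros H; cbn [rising]; [lra|].
  apply Rmult_integral_contrapositive; split; [apply IH; intros; apply H | apply H]; lia.
Qed.

Lemma rising_1 k : rising 1 k = INR (Factorial.fact (S k)).
Proof.
  induction k as [|k IH]; [simpl; ring|].
  cbn [rising]; rewrite IH, (fact_simpl (S k)), mult_INR, (S_INR (S k)); ring.
Qed.

Lemma rising_2 k : rising 2 k = INR (Factorial.fact (S (S k))) / 2.
Proof.
  induction k as [|k IH]; [simpl; field|].
  cbn [rising]; rewrite IH, (fact_simpl (S (S k))), mult_INR, (S_INR (S (S k))), (S_INR (S k)).
  field.
Qed.

Lemma deg_lt_mul_rising k p c f :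
  deg_lt k f -> deg_lt (k + p) (fun l => rising (c + INR l) p * f l).
Proof.
  intros Hf; induction p as [|p IH].
  - rewrite Nat.add_0_r; eapply deg_lt_ext; [|exact Hf]; intros; simpl; ring.
  - rewrite Nat.add_succ_r.
    refine (deg_lt_ext _ _ _ _ (deg_lt_mul_linear _ (c + INR (S p)) _ IH)).
    intros l; cbn [rising]; ring.
Qed.

Lemma rising_expand c N : exists Q : R -> R,
  (forall z, rising (z + c) N = rising c N + z * Q z) /\
  (forall b, deg_lt N (fun l => Q (b + INR l))).
Proof.
  induction N as [|N [Q [HQ HdQ]]].
  - exists (fun _ => 0); split; [intros; simpl; ring | intros; simpl; auto].
  - exists (fun z => rising (z + c) N + (c + INR (S N)) * Q z); split.
    + intros z; cbn [rising]; rewrite HQ; ring.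
    + intros b; apply deg_lt_plus.
      * refine (deg_lt_ext _ _ _ _ (deg_lt_mul_rising 1 N (b + c) _ (deg_lt_const 1))).
        intros l; rewrite Rmult_1_r; f_equal; ring.
      * apply deg_lt_scal, deg_lt_S, HdQ.
Qed.

Lemma altsum_inv_linear N b : 0 < b ->
  altsum N (fun l => / (b + INR l)) = INR (Factorial.fact N) / (b * rising b N).
Proof.
  revert b; induction N as [|N IH]; intros b Hb.
  - unfold altsum; simpl; field; lra.
  - rewrite altsum_succ, IH by lra.
    rewrite (altsum_ext N _ (fun l => / ((b + 1) + INR l))) by (intros; rewrite S_INR; f_equal; ring).
    rewrite IH, <- rising_succ_l by lra.
    assert (0 < rising b N) by (apply rising_pos; lra).
    pose proof (pos_INR N).
    cbn [rising]; rewrite fact_simpl, mult_INR, !S_INR; field; repeat split; lra.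
Qed.

Lemma altsum_rising_div N b c : 0 < b ->
  altsum N (fun l => rising (b + INR l + c) N / (b + INR l)) =
  rising c N * (INR (Factorial.fact N) / (b * rising b N)).
Proof.
  intros Hb; destruct (rising_expand c N) as [Q [HQ HdQ]].
  rewrite (altsum_ext N _ (fun l => rising c N * / (b + INR l) + Q (b + INR l))).
  - rewrite altsum_plus, altsum_scal, altsum_inv_linear, (altsum_deg_lt _ _ (HdQ b)) by lra.
    ring.
  - intros l _; pose proof (pos_INR l); rewrite HQ; field; lra.
Qed.

Definition moment_sum (a : R) (N j : nat) : R :=
  altsum N (fun l => rising (a + INR l) (N + 2) /
     ((a + INR j + INR l) * (a + INR j + INR l + 1) * (a + INR j + INR l + 2))).

(* For [1 <= j <= N] the three denominators are factors of the numerator, and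
   what is left is a polynomial of degree [N - 1] in [l]. *)
Lemma moment_sum_mid a N j : 0 < a -> (1 <= j <= N)%nat -> moment_sum a N j = 0.
Proof.
  intros Ha Hj; destruct j as [|j]; [lia|].
  apply altsum_deg_lt.
  assert (D : deg_lt N (fun l => rising (a + INR l) j *
                                   (rising (a + INR (j + 3) + INR l) (N - S j) * 1))).
  { replace N with (1 + (N - S j) + j)%nat at 1 by lia.
    apply deg_lt_mul_rising, deg_lt_mul_rising, deg_lt_const. }
  refine (deg_lt_ext _ _ _ _ D); intros l; cbv beta.
  replace (N + 2)%nat with (j + 3 + (N - S j))%nat by lia.
  rewrite rising_add; replace (j + 3)%nat with (S (S (S j))) by lia.
  pose proof (pos_INR l); pose proof (pos_INR j).
  replace (a + INR l + INR (S (S (S j)))) with (a + INR (S (S (S j))) + INR l) by ring.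
  cbn [rising]; rewrite !S_INR; field; repeat split; lra.
Qed.

Lemma moment_sum_0 a N : 0 < a ->
  moment_sum a N 0 = rising 2 N * (INR (Factorial.fact N) / (a * rising a N)).
Proof.
  intros Ha; unfold moment_sum; rewrite <- altsum_rising_div by lra.
  apply altsum_ext; intros l _; pose proof (pos_INR l).
  replace (N + 2)%nat with (2 + N)%nat by lia.
  rewrite rising_add; replace (a + INR l + INR 2) with (a + INR l + 2) by (simpl; ring).
  cbn [rising]; simpl INR; field; repeat split; lra.
Qed.

Lemma moment_sum_last a N : 0 < a ->
  moment_sum a N (S N) =
  rising (- (INR N + 3)) N * (INR (Factorial.fact N) / ((a + INR N + 3) * rising (a + INR N + 3) N)).
Proof.
  intros Ha; pose proof (pos_INR N); unfold moment_sum.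
  rewrite <- altsum_rising_div by lra.
  apply altsum_ext; intros l _; pose proof (pos_INR l).
  replace (a + INR N + 3 + INR l + - (INR N + 3)) with (a + INR l) by ring.
  replace (N + 2)%nat with (S (S N)) by lia.
  cbn [rising]; rewrite !S_INR; field; repeat split; lra.
Qed.

(** * Real analysis *)

Lemma ball_R (x : R) (e : posreal) y : ball x e y <-> Rabs (y - x) < e.
Proof. reflexivity. Qed.

Lemma Rpower_pos x y : 0 < Rpower x y.
Proof. apply exp_pos. Qed.

Lemma is_derive_Rpower r t : 0 < t -> is_derive (fun x => Rpower x r) t (r * Rpower t (r - 1)).
Proof. intros; apply is_derive_Reals, derivable_pt_lim_power; auto. Qed.

Lemma continuous_Rpower r t : 0 < t -> continuous (fun x => Rpower x r) t.
Proof. intros Ht; apply (ex_derive_continuous (fun x => Rpower x r)); eexists; apply is_derive_Rpower, Ht. Qed.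

Lemma is_derive_exp_opp t : is_derive (fun x => exp (- x)) t (- exp (- t)).
Proof. auto_derive; auto; ring. Qed.

Lemma continuous_exp_opp t : continuous (fun x => exp (- x)) t.
Proof. apply (ex_derive_continuous (fun x => exp (- x))); eexists; apply is_derive_exp_opp. Qed.

Lemma Rmin_Rmax_pos a b x : 0 < a -> 0 < b -> Rmin a b <= x <= Rmax a b -> 0 < x.
Proof. intros Ha Hb Hx; assert (0 < Rmin a b) by (apply Rmin_pos; auto); lra. Qed.

Lemma filterlim_squeeze_0 {T} (F : (T -> Prop) -> Prop) {FF : Filter F} (f g : T -> R) (C : R) :
  0 < C -> F (fun x => Rabs (f x) <= C * Rabs (g x)) -> filterlim g F (locally 0) ->
  filterlim f F (locally 0).
Proof.
  intros HC Hb Hg; apply filterlim_locally; intros [e He].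
  assert (He' : 0 < e / C) by (apply Rdiv_lt_0_compat; auto).
  generalize (filter_and _ _ Hb (proj1 (filterlim_locally g 0) Hg (mkposreal _ He'))).
  apply filter_imp; intros x [H1 H2]; rewrite ball_R in *; simpl in *.
  rewrite Rminus_0_r in *; apply (Rmult_lt_compat_l C) in H2; auto.
  replace (C * (e / C)) with e in H2 by (field; lra); lra.
Qed.

Lemma RInt_abs_le f g b b' :
  (forall x, Rmin b b' <= x <= Rmax b b' -> 0 <= f x <= g x) ->
  ex_RInt f b b' -> ex_RInt g b b' -> Rabs (RInt f b b') <= Rabs (RInt g b b').
Proof.
  assert (Hord : forall u v, u <= v -> (forall x, u <= x <= v -> 0 <= f x <= g x) ->
            ex_RInt f u v -> ex_RInt g u v -> Rabs (RInt f u v) <= Rabs (RInt g u v)).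
  { intros u v Huv H Hf Hg.
    assert (0 <= RInt f u v) by (apply RInt_ge_0; auto; intros; apply H; lra).
    assert (RInt f u v <= RInt g u v) by (apply RInt_le; auto; intros; apply H; lra).
    rewrite !Rabs_pos_eq; lra. }
  intros H Hf Hg; destruct (Rle_dec b b') as [Hb|Hb].
  - rewrite Rmin_left, Rmax_right in H by lra; auto.
  - rewrite Rmin_right, Rmax_left in H by lra.
    apply ex_RInt_swap in Hf; apply ex_RInt_swap in Hg.
    rewrite <- (opp_RInt_swap f), <- (opp_RInt_swap g) by assumption.
    change (Rabs (- RInt f b' b) <= Rabs (- RInt g b' b)); rewrite !Rabs_Ropp.
    apply Hord; auto; lra.
Qed.

Lemma ex_RInt_gen_cauchy (Fb : (R -> Prop) -> Prop) (PF : ProperFilter Fb) (f G : R -> R) (a Gl : R)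
  (D : R -> Prop) :
  Fb D -> (forall b, D b -> ex_RInt f a b) ->
  (forall b b', D b -> D b' -> Rabs (RInt f a b - RInt f a b') <= Rabs (G b - G b')) ->
  filterlim G Fb (locally Gl) -> ex_RInt_gen f (at_point a) Fb.
Proof.
  intros HD Hex Hle HG.
  destruct (proj1 (filterlim_locally_cauchy (U:=R_CompleteSpace) (F:=Fb) (fun b => RInt f a b)))
    as [y Hy].
  { intros eps; assert (E2: 0 < eps / 2) by (destruct eps; simpl; lra).
    pose proof (proj1 (filterlim_locally G Gl) HG (mkposreal _ E2)) as HB.
    exists (fun b => D b /\ ball Gl (mkposreal _ E2) (G b)); split; [apply filter_and; auto|].
    intros u v [Du Bu] [Dv Bv]; rewrite ball_R in *; simpl in *.
    specialize (Hle v u Dv Du).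
    assert (Rabs (G v - G u) <= Rabs (G v - Gl) + Rabs (G u - Gl)).
    { replace (G v - G u) with ((G v - Gl) + - (G u - Gl)) by ring.
      rewrite <- (Rabs_Ropp (G u - Gl)); apply Rabs_triang. }
    lra. }
  exists y; apply filterlimi_lim_ext_loc with (fun ab => RInt f a (snd ab)).
  - apply (Filter_prod _ _ _ (fun x => x = a) D); [reflexivity|auto|].
    intros x b -> Db; simpl; apply (RInt_correct f a b), Hex; auto.
  - eapply filterlim_comp; [apply filterlim_snd | exact Hy].
Qed.

Lemma ex_RInt_gen_dominated (Fb : (R -> Prop) -> Prop) (PF : ProperFilter Fb)
  (f G G' : R -> R) (a Gl : R) (D : R -> Prop) :
  Fb D ->
  (forall b x, D b -> Rmin a b <= x <= Rmax a b ->
     continuous f x /\ continuous G' x /\ is_derive G x (G' x) /\ 0 <= f x <= G' x) ->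
  filterlim G Fb (locally Gl) -> ex_RInt_gen f (at_point a) Fb.
Proof.
  intros HD H HG.
  assert (Hbetween : forall b b' x, D b -> D b' -> Rmin b b' <= x <= Rmax b b' ->
            continuous f x /\ continuous G' x /\ is_derive G x (G' x) /\ 0 <= f x <= G' x).
  { intros b b' x Db Db' Hx.
    assert (Hx' : Rmin a b <= x <= Rmax a b \/ Rmin a b' <= x <= Rmax a b')
      by (unfold Rmin, Rmax in *; repeat destruct Rle_dec; lra).
    destruct Hx'; [apply (H b) | apply (H b')]; auto. }
  assert (Hex : forall b b', D b -> D b' -> ex_RInt f b b').
  { intros b b' Db Db'; apply (ex_RInt_continuous (V:=R_CompleteNormedModule)).
    intros x Hx; apply (Hbetween b b' x Db Db' Hx). }
  assert (Hex_a : forall b, D b -> ex_RInt f a b).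
  { intros b Db; apply (ex_RInt_continuous (V:=R_CompleteNormedModule)).
    intros x Hx; apply (H b x Db Hx). }
  apply (ex_RInt_gen_cauchy Fb PF f G a Gl D HD Hex_a); [|exact HG].
  intros b b' Db Db'.
  assert (Hch : RInt f a b' + RInt f b' b = RInt f a b)
    by exact (RInt_Chasles (V:=R_CompleteNormedModule) f a b' b (Hex_a b' Db') (Hex b' b Db' Db)).
  replace (RInt f a b - RInt f a b') with (RInt f b' b) by lra.
  assert (HG' : is_RInt G' b' b (G b - G b')).
  { apply (is_RInt_derive G G'); intros x Hx; apply (Hbetween b' b x Db' Db Hx). }
  rewrite <- (is_RInt_unique _ _ _ _ HG').
  apply RInt_abs_le; [intros x Hx; apply (Hbetween b' b x Db' Db Hx) | auto | eexists; exact HG'].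
Qed.

Lemma Rpower_div_lim_0 s : 0 < s -> filterlim (fun b => Rpower b s / s) (at_right 0) (locally 0).
Proof.
  intros Hs; apply filterlim_locally; intros [e He].
  exists (mkposreal _ (Rpower_pos (e * s) (/ s))); intros y By Hy.
  rewrite ball_R in *; simpl in *; rewrite Rminus_0_r, Rabs_pos_eq in * by lra.
  assert (Rpower y s < Rpower (Rpower (e * s) (/ s)) s) by (apply Rlt_Rpower_l; lra).
  rewrite Rpower_mult, Rinv_l, Rpower_1 in H by (try apply Rmult_lt_0_compat; lra).
  rewrite Rabs_pos_eq; [apply (Rmult_lt_reg_r s); auto; field_simplify; lra|].
  apply Rmult_le_pos; [left; apply Rpower_pos | left; apply Rinv_0_lt_compat; lra].
Qed.

Lemma Rpower_exp_lim_0 s : 0 < s -> filterlim (fun t => Rpower t s * exp (- t)) (at_right 0) (locally 0).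
Proof.
  intros Hs; apply (filterlim_squeeze_0 _ _ (fun b => Rpower b s / s) s Hs); [|apply Rpower_div_lim_0; auto].
  exists (mkposreal 1 Rlt_0_1); intros y _ Hy.
  pose proof (Rpower_pos y s); pose proof (exp_pos (- y)).
  assert (exp (- y) < 1) by (rewrite <- exp_0; apply exp_increasing; lra).
  rewrite !Rabs_pos_eq by (apply Rmult_le_pos; try apply Rlt_le, Rinv_0_lt_compat; lra).
  replace (s * (Rpower y s / s)) with (Rpower y s) by (field; lra); nra.
Qed.

Lemma ln_le_sqrt t : 0 < t -> ln t <= 2 * sqrt t.
Proof.
  intros Ht; assert (Hs : 0 < sqrt t) by (apply sqrt_lt_R0; auto).
  rewrite <- (sqrt_sqrt t) at 1 by lra; rewrite ln_mult by auto.
  pose proof (exp_ineq1_le (ln (sqrt t))) as H; rewrite exp_ln in H by auto; lra.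
Qed.

(* For [t >= 16 s^2] one has [s ln t <= t / 2], hence [t^s e^(-t) <= e^(-t/2)]. *)
Lemma Rpower_exp_lim_infty s : 0 < s ->
  filterlim (fun t => Rpower t s * exp (- t)) (Rbar_locally p_infty) (locally 0).
Proof.
  intros Hs; apply filterlim_locally; intros [e He].
  exists (Rmax 1 (Rmax (16 * s * s) (- 2 * ln e))); intros t Ht.
  assert (H1 := Rle_lt_trans _ _ _ (Rmax_l _ _) Ht).
  assert (H2 := Rle_lt_trans _ _ _ (Rle_trans _ _ _ (Rmax_l _ _) (Rmax_r 1 _)) Ht).
  assert (H3 := Rle_lt_trans _ _ _ (Rle_trans _ _ _ (Rmax_r _ _) (Rmax_r 1 _)) Ht).
  rewrite ball_R; simpl; rewrite Rminus_0_r.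
  rewrite Rabs_pos_eq by (apply Rmult_le_pos; [left; apply Rpower_pos | left; apply exp_pos]).
  unfold Rpower; rewrite <- exp_plus.
  assert (Hsq : 4 * s <= sqrt t).
  { rewrite <- (sqrt_square (4 * s)) by lra; apply sqrt_le_1_alt; lra. }
  assert (Hl := ln_le_sqrt t ltac:(lra)).
  assert (Ht2 : sqrt t * sqrt t = t) by (apply sqrt_sqrt; lra).
  assert (s * ln t <= t / 2).
  { apply Rle_trans with (s * (2 * sqrt t)); [apply Rmult_le_compat_l; lra|].
    pose proof (sqrt_pos t); nra. }
  apply Rle_lt_trans with (exp (- t / 2)).
  { destruct (Req_dec (s * ln t + - t) (- t / 2)) as [E|E];
      [rewrite E; lra | left; apply exp_increasing; lra]. }
  rewrite <- (exp_ln e He); apply exp_increasing; lra.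
Qed.

Lemma is_derive_sum_f_R0 (F : nat -> R -> R) (F' : nat -> R) N x :
  (forall l, (l <= N)%nat -> is_derive (F l) x (F' l)) ->
  is_derive (fun y => sum_f_R0 (fun l => F l y) N) x (sum_f_R0 F' N).
Proof.
  intros H; induction N as [|N IH]; simpl; [apply H; auto|].
  apply (is_derive_plus (fun y => sum_f_R0 (fun l => F l y) N) (F (S N))); auto.
Qed.

Lemma ex_derive_sum_f_R0 (F : nat -> R -> R) N x : (forall l, ex_derive (F l) x) ->
  ex_derive (fun y => sum_f_R0 (fun l => F l y) N) x.
Proof.
  intros H; induction N as [|N IH]; simpl; [apply H|].
  apply (ex_derive_plus (fun y => sum_f_R0 (fun l => F l y) N) (F (S N))); auto.
Qed.

Lemma Lim_seq_continuous (f : R -> R) (u : nat -> R) (y : R) :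
  continuity_pt f y -> is_lim_seq u y -> real (Lim_seq (fun k => f (u k))) = f y.
Proof. intros Hf Hu; rewrite (is_lim_seq_unique _ (f y)); [reflexivity|]. now apply is_lim_seq_continuous. Qed.

Lemma is_lim_seq_inv_shift : is_lim_seq (fun k => / INR (k + 2)) 0.
Proof.
  assert (H : is_lim_seq (fun k => INR (k + 2)) p_infty)
    by (apply (is_lim_seq_incr_n INR 2), is_lim_seq_INR).
  apply is_lim_seq_inv in H; [exact H | discriminate].
Qed.

Lemma inv_shift_bounds k : 0 < / INR (k + 2) < 1.
Proof.
  assert (1 < INR (k + 2)) by (rewrite plus_INR; simpl; pose proof (pos_INR k); lra).
  split; [apply Rinv_0_lt_compat; lra | rewrite <- Rinv_1; apply Rinv_lt_contravar; lra].
Qed.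

Lemma is_RInt_sum_f_R0 (F : nat -> R -> R) (v : nat -> R) N a b :
  (forall l, (l <= N)%nat -> is_RInt (F l) a b (v l)) ->
  is_RInt (fun x => sum_f_R0 (fun l => F l x) N) a b (sum_f_R0 v N).
Proof.
  intros H; induction N as [|N IH]; simpl; [apply H; auto|].
  apply (is_RInt_plus (V:=R_NormedModule) (fun x => sum_f_R0 (fun l => F l x) N) (F (S N))); auto.
Qed.

Lemma is_RInt_monomial c n : is_RInt (fun x => c * x ^ n) 0 1 (c / INR (n + 1)).
Proof.
  assert (Hn : 0 < INR (n + 1)) by (apply lt_0_INR; lia).
  replace (c / INR (n + 1)) with (c * 1 ^ (n + 1) / INR (n + 1) - c * 0 ^ (n + 1) / INR (n + 1))
    by (rewrite pow1, pow_i by lia; field; lra).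
  apply (is_RInt_derive (fun x => c * x ^ (n + 1) / INR (n + 1))).
  - intros x _; auto_derive; auto; replace (Nat.pred (n + 1)) with n by lia; field; lra.
  - intros x _; apply (ex_derive_continuous (fun x => c * x ^ n)); auto_derive; auto.
Qed.

(** * The Gamma function *)

Definition gamma_integrand (s t : R) : R := Rpower t (s - 1) * exp (- t).

Definition Gamma_converges (s : R) : Prop :=
  is_RInt_gen (gamma_integrand s) (at_right 0) (Rbar_locally p_infty) (Gamma s).

Lemma gamma_integrand_pos s t : 0 < gamma_integrand s t.
Proof. apply Rmult_lt_0_compat; [apply Rpower_pos | apply exp_pos]. Qed.

Lemma ex_derive_gamma_integrand s t : 0 < t -> ex_derive (gamma_integrand s) t.
Proof.
  intros Ht; apply (ex_derive_mult (fun t => Rpower t (s - 1)) (fun t => exp (- t))).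
  - eexists; apply is_derive_Rpower, Ht.
  - eexists; apply is_derive_exp_opp.
Qed.

Lemma continuous_gamma_integrand s t : 0 < t -> continuous (gamma_integrand s) t.
Proof. intros Ht; apply (ex_derive_continuous (gamma_integrand s)), ex_derive_gamma_integrand, Ht. Qed.

Lemma ex_RInt_gen_gamma_0_1 s : 0 < s -> ex_RInt_gen (gamma_integrand s) (at_right 0) (at_point 1).
Proof.
  intros Hs.
  assert (H : ex_RInt_gen (gamma_integrand s) (at_point 1) (at_right 0)).
  { apply (ex_RInt_gen_dominated _ (at_right_proper_filter 0) _ (fun b => Rpower b s / s)
             (fun x => Rpower x (s - 1)) 1 0 (fun b => 0 < b < 1)).
    - exists (mkposreal 1 Rlt_0_1); intros y By Hy.
      rewrite ball_R, Rminus_0_r, Rabs_pos_eq in By; simpl in By; lra.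
    - intros b x Db Hx; assert (Hx0 : 0 < x) by (apply (Rmin_Rmax_pos 1 b); lra).
      split; [|split; [|split]].
      + apply continuous_gamma_integrand, Hx0.
      + apply continuous_Rpower, Hx0.
      + apply (is_derive_ext (fun x => / s * Rpower x s)); [intros; unfold Rdiv; apply Rmult_comm|].
        replace (Rpower x (s - 1)) with (/ s * (s * Rpower x (s - 1))) by (field; lra).
        apply is_derive_scal, is_derive_Rpower, Hx0.
      + pose proof (Rpower_pos x (s - 1)); pose proof (exp_pos (- x)).
        assert (exp (- x) < 1) by (rewrite <- exp_0; apply exp_increasing; lra).
        unfold gamma_integrand; split; nra.
    - apply Rpower_div_lim_0, Hs. }
  destruct H as [l Hl]; exists (opp l); apply is_RInt_gen_swap, Hl.
Qed.

Lemma ex_RInt_gen_gamma_1_infty s : s <= 1 ->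
  ex_RInt_gen (gamma_integrand s) (at_point 1) (Rbar_locally p_infty).
Proof.
  intros Hs.
  apply (ex_RInt_gen_dominated _ (Rbar_locally_filter p_infty) _ (fun b => - exp (- b))
           (fun x => exp (- x)) 1 0 (fun b => 1 < b)); [exists 1; auto | |].
  - intros b x Db Hx; rewrite Rmin_left, Rmax_right in Hx by lra.
    split; [|split; [|split]].
    + apply continuous_gamma_integrand; lra.
    + apply continuous_exp_opp.
    + auto_derive; auto; ring.
    + assert (Rpower x (s - 1) <= 1)
        by (apply Rle_trans with (Rpower x 0); [apply Rle_Rpower | rewrite Rpower_O]; lra).
      pose proof (Rpower_pos x (s - 1)); pose proof (exp_pos (- x)).
      unfold gamma_integrand; split; nra.
  - apply filterlim_locally; intros [e He]; exists (- ln e); intros b Hb.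
    rewrite ball_R, Rminus_0_r, Rabs_Ropp, Rabs_pos_eq by (left; apply exp_pos).
    simpl; rewrite <- (exp_ln e He); apply exp_increasing; lra.
Qed.

Lemma Gamma_converges_le_1 s : 0 < s <= 1 -> Gamma_converges s.
Proof.
  intros Hs; apply (RInt_gen_correct (V:=R_CompleteNormedModule)).
  apply (ex_RInt_gen_Chasles _ 1);
    [apply ex_RInt_gen_gamma_0_1 | apply ex_RInt_gen_gamma_1_infty]; lra.
Qed.

Lemma filter_prod_pos :
  filter_prod (at_right 0) (Rbar_locally p_infty) (fun ab => 0 < fst ab /\ 0 < snd ab).
Proof.
  apply (Filter_prod _ _ _ (fun x => 0 < x) (fun y => 0 < y));
    [exists (mkposreal 1 Rlt_0_1); auto | exists 0; auto | intros; simpl; auto].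
Qed.

(* Integration by parts against [t^s e^(-t)], which vanishes at both ends. *)
Lemma is_RInt_gen_gamma_succ s g : 0 < s ->
  is_RInt_gen (gamma_integrand s) (at_right 0) (Rbar_locally p_infty) g ->
  is_RInt_gen (gamma_integrand (s + 1)) (at_right 0) (Rbar_locally p_infty) (s * g).
Proof.
  intros Hs Hg.
  set (F := fun t => Rpower t s * exp (- t)).
  set (F' := fun t => s * gamma_integrand s t - gamma_integrand (s + 1) t).
  assert (HF : forall t, 0 < t -> is_derive F t (F' t)).
  { intros t Ht; unfold F', gamma_integrand; replace (s + 1 - 1) with s by ring.
    replace (s * (Rpower t (s - 1) * exp (- t)) - Rpower t s * exp (- t)) with
      ((s * Rpower t (s - 1)) * exp (- t) + Rpower t s * (- exp (- t))) by ring.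
    apply (is_derive_mult (fun t => Rpower t s) (fun t => exp (- t)));
      [apply is_derive_Rpower; auto | apply is_derive_exp_opp | intros; apply Rmult_comm]. }
  assert (HD : is_RInt_gen (Derive F) (at_right 0) (Rbar_locally p_infty) (0 - 0)).
  { apply is_RInt_gen_Derive;
      [| | apply Rpower_exp_lim_0, Hs | apply Rpower_exp_lim_infty, Hs];
      eapply filter_imp; try exact filter_prod_pos; intros [a b] [Ha Hb] x Hx;
      simpl in *; assert (Hx0 : 0 < x) by (apply (Rmin_Rmax_pos a b); auto).
    - eexists; apply HF, Hx0.
    - apply continuous_ext_loc with F'.
      + generalize (open_gt 0 x Hx0); apply filter_imp; intros y Hy.
        symmetry; apply is_derive_unique, HF, Hy.
      + apply (ex_derive_continuous F'), (ex_derive_minus (fun t => s * gamma_integrand s t));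
          [apply (ex_derive_scal (gamma_integrand s)) |]; apply ex_derive_gamma_integrand, Hx0. }
  assert (HM := is_RInt_gen_minus _ _ _ _ (is_RInt_gen_scal _ s _ Hg) HD).
  replace (s * g) with (minus (scal s g) (0 - 0))
    by (unfold minus, plus, opp, scal; simpl; unfold mult; simpl; ring).
  eapply is_RInt_gen_ext; [|exact HM].
  eapply filter_imp; [|exact filter_prod_pos]; intros [a b] [Ha Hb] x Hx; simpl in *.
  rewrite (is_derive_unique _ _ _ (HF x (Rmin_Rmax_pos a b x Ha Hb ltac:(lra)))).
  unfold minus, plus, opp, scal; simpl; unfold mult, F'; simpl; ring.
Qed.

Lemma is_RInt_gen_gamma_1 : is_RInt_gen (gamma_integrand 1) (at_right 0) (Rbar_locally p_infty) 1.
Proof.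
  assert (HD : is_RInt_gen (Derive (fun t => - exp (- t))) (at_right 0) (Rbar_locally p_infty) (0 - -1)).
  { apply is_RInt_gen_Derive.
    - apply filter_forall; intros; auto_derive; auto.
    - apply filter_forall; intros ab x _.
      apply continuous_ext with (fun t => exp (- t)); [|apply continuous_exp_opp].
      intros t; symmetry; apply is_derive_unique; auto_derive; auto; ring.
    - replace (-1) with (- exp (- 0)) by (rewrite Ropp_0, exp_0; ring).
      apply (@filterlim_filter_le_1 R R (locally 0) (at_right 0));
        [intros P [d Hd]; exists d; intros y By _; apply Hd; auto|].
      apply (ex_derive_continuous (fun t => - exp (- t))); auto_derive; auto.
    - apply (filterlim_squeeze_0 _ _ (fun t => Rpower t 1 * exp (- t)) 1 Rlt_0_1);
        [|apply Rpower_exp_lim_infty; lra].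
      exists 1; intros t Ht; rewrite Rpower_1, Rabs_Ropp by lra.
      pose proof (exp_pos (- t)); rewrite !Rabs_pos_eq by nra; nra. }
  replace (0 - -1) with 1 in HD by ring.
  eapply is_RInt_gen_ext; [|exact HD].
  eapply filter_imp; [|exact filter_prod_pos]; intros [a b] [Ha Hb] x Hx; simpl in *.
  rewrite (is_derive_unique _ x (exp (- x))) by (auto_derive; auto; ring).
  unfold gamma_integrand; replace (1 - 1) with 0 by ring.
  rewrite Rpower_O by (apply (Rmin_Rmax_pos a b); auto; lra); ring.
Qed.

Lemma Gamma_1 : Gamma 1 = 1.
Proof. unfold Gamma; apply (is_RInt_gen_unique (V:=R_CompleteNormedModule)), is_RInt_gen_gamma_1. Qed.

Lemma Gamma_converges_1 : Gamma_converges 1.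
Proof. unfold Gamma_converges; rewrite Gamma_1; apply is_RInt_gen_gamma_1. Qed.

Lemma Gamma_succ s : 0 < s -> Gamma_converges s ->
  Gamma_converges (s + 1) /\ Gamma (s + 1) = s * Gamma s.
Proof.
  intros Hs H; assert (H1 := is_RInt_gen_gamma_succ s (Gamma s) Hs H).
  assert (E : Gamma (s + 1) = s * Gamma s)
    by (unfold Gamma at 1; apply (is_RInt_gen_unique (V:=R_CompleteNormedModule)), H1).
  split; [unfold Gamma_converges; rewrite E|]; auto.
Qed.

Lemma Gamma_converges_add_nat s k : 0 < s -> Gamma_converges s -> Gamma_converges (s + INR k).
Proof.
  intros Hs H; induction k as [|k IH]; [simpl; rewrite Rplus_0_r; auto|].
  rewrite S_INR, <- Rplus_assoc; apply Gamma_succ; auto; pose proof (pos_INR k); lra.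
Qed.

Lemma Gamma_add_nat s k : 0 < s -> Gamma_converges s ->
  Gamma (s + INR (S k)) = Gamma s * (s * rising s k).
Proof.
  intros Hs H; induction k as [|k IH].
  - simpl; rewrite (proj2 (Gamma_succ s Hs H)); ring.
  - rewrite (S_INR (S k)), <- Rplus_assoc.
    rewrite (proj2 (Gamma_succ (s + INR (S k)) ltac:(pose proof (pos_INR (S k)); lra)
                     (Gamma_converges_add_nat s (S k) Hs H))).
    rewrite IH; cbn [rising]; ring.
Qed.

Lemma Gamma_nat N : Gamma (INR (S N)) = INR (Factorial.fact N).
Proof.
  destruct N as [|N]; [apply Gamma_1|].
  replace (INR (S (S N))) with (1 + INR (S N)) by (rewrite (S_INR (S N)); ring).
  rewrite Gamma_add_nat, Gamma_1, rising_1 by (auto using Gamma_converges_1; lra); ring.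
Qed.

Lemma Gamma_converges_half_nat d : (1 <= d)%nat -> Gamma_converges (INR d / 2).
Proof.
  intros Hd; destruct (Nat.Even_or_Odd d) as [[e He]|[e He]]; subst d.
  - destruct e as [|e]; [lia|].
    replace (INR (2 * S e) / 2) with (1 + INR e)
      by (rewrite mult_INR, (S_INR e); simpl INR; field).
    apply Gamma_converges_add_nat; [lra | apply Gamma_converges_1].
  - replace (INR (2 * e + 1) / 2) with (1/2 + INR e)
      by (rewrite plus_INR, mult_INR; simpl INR; field).
    apply Gamma_converges_add_nat; [lra | apply Gamma_converges_le_1; lra].
Qed.

Definition gamma_bump (s t : R) : R :=
  if Rle_dec t 1 then 0 else if Rle_dec t 2 then gamma_integrand s t else 0.

Lemma filter_prod_far :
  filter_prod (at_right 0) (Rbar_locally p_infty) (fun ab => 0 < fst ab < 1 /\ 2 < snd ab).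
Proof.
  apply (Filter_prod _ _ _ (fun x => 0 < x < 1) (fun y => 2 < y)); [|exists 2; auto | simpl; auto].
  exists (mkposreal 1 Rlt_0_1); intros y By Hy.
  rewrite ball_R in By; apply Rabs_def2 in By; simpl in By; lra.
Qed.

Lemma is_RInt_gen_gamma_bump s :
  is_RInt_gen (gamma_bump s) (at_right 0) (Rbar_locally p_infty) (RInt (gamma_integrand s) 1 2).
Proof.
  set (V := RInt (gamma_integrand s) 1 2).
  assert (Hzero : forall u v, (forall z, Rmin u v < z < Rmax u v -> gamma_bump s z = 0) ->
                  is_RInt (gamma_bump s) u v 0).
  { intros u v Hz; apply is_RInt_ext with (fun _ => 0); [intros; symmetry; apply Hz; auto|].
    assert (HC : is_RInt (fun _ => 0) u v ((v - u) * 0))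
      by exact (is_RInt_const (V:=R_NormedModule) u v 0).
    rewrite Rmult_0_r in HC; exact HC. }
  apply filterlimi_lim_ext_loc with (fun _ => V); [|apply filterlim_const].
  eapply filter_imp; [|exact filter_prod_far]; intros [x y] [Hx Hy]; simpl in *.
  replace V with (plus 0 (plus V 0)) by (unfold plus; simpl; ring).
  apply (is_RInt_Chasles (V:=R_NormedModule)) with 1;
    [apply Hzero; intros z Hz; rewrite Rmin_left, Rmax_right in Hz by lra; unfold gamma_bump;
     destruct Rle_dec; lra|].
  apply (is_RInt_Chasles (V:=R_NormedModule)) with 2;
    [|apply Hzero; intros z Hz; rewrite Rmin_left, Rmax_right in Hz by lra; unfold gamma_bump;
      repeat destruct Rle_dec; lra].
  apply is_RInt_ext with (gamma_integrand s).
  - intros z Hz; rewrite Rmin_left, Rmax_right in Hz by lra; unfold gamma_bump.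
    repeat destruct Rle_dec; lra.
  - apply (RInt_correct (V:=R_CompleteNormedModule)), (ex_RInt_continuous (V:=R_CompleteNormedModule)).
    intros z Hz; rewrite Rmin_left, Rmax_right in Hz by lra.
    apply continuous_gamma_integrand; lra.
Qed.

(* [Gamma s] dominates the integral of [gamma_integrand s] over [1, 2]. *)
Lemma Gamma_pos s : Gamma_converges s -> 0 < Gamma s.
Proof.
  intros H.
  assert (HV : 0 < RInt (gamma_integrand s) 1 2).
  { apply RInt_gt_0; [lra | intros; apply gamma_integrand_pos |].
    intros; apply continuous_gamma_integrand; lra. }
  enough (Hn : norm (RInt (gamma_integrand s) 1 2) <= Gamma s)
    by (change (Rabs (RInt (gamma_integrand s) 1 2) <= Gamma s) in Hn;
        rewrite Rabs_pos_eq in Hn; lra).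
  apply (RInt_gen_norm (V:=R_CompleteNormedModule) (Fa := at_right 0) (Fb := Rbar_locally p_infty)
           (gamma_bump s) (gamma_integrand s)); auto using is_RInt_gen_gamma_bump.
  - eapply filter_imp; [|exact filter_prod_far]; intros [x y] [Hx Hy]; simpl in *; lra.
  - eapply filter_imp; [|exact filter_prod_pos]; intros [a b] [Ha Hb] z Hz; simpl in *.
    pose proof (gamma_integrand_pos s z).
    change (Rabs (gamma_bump s z) <= gamma_integrand s z); unfold gamma_bump.
    repeat destruct Rle_dec; rewrite ?Rabs_R0, ?Rabs_pos_eq; lra.
Qed.

(** * Jacobi polynomials with [beta = -2] *)

Lemma is_derive_n_Rpower_1_minus g k t : t < 1 ->
  is_derive_n (fun t => Rpower (1 - t) g) k t
    ((-1) ^ k * rising (g - INR k) k * Rpower (1 - t) (g - INR k)).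
Proof.
  revert t; induction k as [|k IH]; intros t Ht.
  - simpl; rewrite Rminus_0_r; ring.
  - apply is_derive_ext_loc with (fun u => (-1) ^ k * rising (g - INR k) k * Rpower (1 - u) (g - INR k)).
    + generalize (open_lt 1 t Ht); apply filter_imp; intros u Hu.
      symmetry; apply is_derive_n_unique, IH, Hu.
    + assert (Hd : is_derive (fun u => Rpower (1 - u) (g - INR k)) t
                       (- ((g - INR k) * Rpower (1 - t) (g - INR k - 1)))).
      { assert (H := is_derive_comp (fun x => Rpower x (g - INR k)) (fun u => 1 - u) t _ (-1)
                       (is_derive_Rpower (g - INR k) (1 - t) ltac:(lra)) ltac:(auto_derive; auto; ring)).
        unfold scal in H; simpl in H; unfold mult in H; simpl in H.
        replace (- ((g - INR k) * Rpower (1 - t) (g - INR k - 1)))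
          with (-1 * ((g - INR k) * Rpower (1 - t) (g - INR k - 1))) by ring.
        exact H. }
      apply (is_derive_scal _ _ ((-1) ^ k * rising (g - INR k) k)) in Hd.
      rewrite rising_succ_l.
      replace (g - INR (S k) + 1) with (g - INR k) by (rewrite S_INR; ring).
      replace (g - INR (S k)) with (g - INR k - 1) by (rewrite S_INR; ring).
      replace ((-1) ^ S k * ((g - INR k) * rising (g - INR k) k) * Rpower (1 - t) (g - INR k - 1))
        with ((-1) ^ k * rising (g - INR k) k * - ((g - INR k) * Rpower (1 - t) (g - INR k - 1)))
        by (simpl; ring).
      exact Hd.
Qed.

Lemma ex_derive_n_Rpower_1_minus g k t : t < 1 -> ex_derive_n (fun t => Rpower (1 - t) g) k t.
Proof. intros Ht; destruct k; [exact I | eexists; exact (is_derive_n_Rpower_1_minus g (S k) t Ht)]. Qed.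

(* Rodrigues' formula for [P_(N+2)^(a,-2)], after expanding
   [(1 + y)^N = (2 - (1 - y))^N] binomially. *)
Definition jacobi_explicit (N : nat) (a y : R) : R :=
  (1 + y) ^ 2 / (2 ^ (N + 2) * INR (Factorial.fact (N + 2))) *
  sum_f_R0 (fun l => binom N l * (-1) ^ l * 2 ^ (N - l) * rising (a + INR l) (N + 2) * (1 - y) ^ l) N.

Lemma jacobi_weight_expand N a t : -1 < t < 1 ->
  Rpower (1 - t) (INR (N + 2) + a) * Rpower (1 + t) (INR (N + 2) + -2) =
  sum_n (fun l => binom N l * (-1) ^ l * 2 ^ (N - l) * Rpower (1 - t) (INR (N + 2) + a + INR l)) N.
Proof.
  intros Ht; rewrite sum_n_Reals.
  replace (INR (N + 2) + -2) with (INR N) by (rewrite plus_INR; simpl; ring).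
  rewrite Rpower_pow by lra.
  replace (1 + t) with ((-1) * (1 - t) + 2) by ring.
  rewrite binomial, Rmult_comm, sum_f_R0_mult_r; apply sum_eq; intros l Hl.
  rewrite binom_C by auto.
  rewrite Rpow_mult_distr, (Rpower_plus _ (INR l)), (Rpower_pow l) by lra.
  ring.
Qed.

Lemma Derive_n_jacobi_weight N a y : -1 < y < 1 ->
  Derive_n (fun t => Rpower (1 - t) (INR (N + 2) + a) * Rpower (1 + t) (INR (N + 2) + -2)) (N + 2) y =
  (-1) ^ (N + 2) * sum_f_R0 (fun l => binom N l * (-1) ^ l * 2 ^ (N - l) *
                                      rising (a + INR l) (N + 2) * Rpower (1 - y) (a + INR l)) N.
Proof.
  intros Hy.
  set (term := fun (l : nat) t => binom N l * (-1) ^ l * 2 ^ (N - l) * Rpower (1 - t) (INR (N + 2) + a + INR l)).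
  assert (HD : is_derive_n (fun t => sum_n (fun l => term l t) N) (N + 2) y
                 (sum_n (fun l => Derive_n (term l) (N + 2) y) N)).
  { apply is_derive_n_sum_n; generalize (open_lt 1 y ltac:(lra)); apply filter_imp.
    intros t Ht l j _ _; apply ex_derive_n_scal_l, ex_derive_n_Rpower_1_minus, Ht. }
  apply is_derive_n_ext_loc with
    (g := fun t => Rpower (1 - t) (INR (N + 2) + a) * Rpower (1 + t) (INR (N + 2) + -2)) in HD.
  2:{ generalize (open_and _ _ (open_gt (-1)) (open_lt 1) y Hy); apply filter_imp.
      intros t Ht; symmetry; apply jacobi_weight_expand, Ht. }
  rewrite (is_derive_n_unique _ _ _ _ HD), sum_n_Reals, <- sum_f_R0_mult_l.
  apply sum_eq; intros l _.
  assert (Hd := is_derive_n_Rpower_1_minus (INR (N + 2) + a + INR l) (N + 2) y ltac:(lra)).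
  replace (INR (N + 2) + a + INR l - INR (N + 2)) with (a + INR l) in Hd by ring.
  apply (is_derive_n_scal_l _ _ (binom N l * (-1) ^ l * 2 ^ (N - l))) in Hd.
  unfold term; rewrite (is_derive_n_unique _ _ _ _ Hd); ring.
Qed.

Lemma jacobi_rod_explicit N a y : -1 < y < 1 -> jacobi_rod (N + 2) a (-2) y = jacobi_explicit N a y.
Proof.
  intros Hy; unfold jacobi_rod, jacobi_explicit; rewrite Derive_n_jacobi_weight by auto.
  replace (- -2) with (INR 2) by (simpl; ring).
  rewrite (Rpower_pow 2), Rpower_Ropp by lra.
  assert (Hsq : (-1) ^ (N + 2) * (-1) ^ (N + 2) = 1)
    by (rewrite <- Rpow_mult_distr, <- (pow1 (N + 2)); f_equal; ring).
  assert (Hfact := INR_fact_lt_0 (N + 2)).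
  assert (H2 : 0 < 2 ^ (N + 2)) by (apply pow_lt; lra).
  assert (Hpow := Rpower_pos (1 - y) a).
  rewrite <- !sum_f_R0_mult_l; apply sum_eq; intros l _.
  rewrite Rpower_plus, Rpower_pow by lra.
  match goal with |- _ = ?rhs => transitivity ((-1) ^ (N + 2) * (-1) ^ (N + 2) * rhs) end;
    [field; repeat split; lra | rewrite Hsq; ring].
Qed.

Lemma continuity_pt_jacobi_explicit N a y : continuity_pt (jacobi_explicit N a) y.
Proof.
  apply continuity_pt_filterlim, (ex_derive_continuous (jacobi_explicit N a)).
  apply (ex_derive_mult (fun y => (1 + y) ^ 2 / (2 ^ (N + 2) * INR (Factorial.fact (N + 2))))).
  - auto_derive; auto.
  - apply ex_derive_sum_f_R0; intros l; auto_derive; auto.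
Qed.

Lemma jacobiP_explicit N a y : -1 <= y <= 1 -> jacobiP (N + 2) a (-2) y = jacobi_explicit N a y.
Proof.
  intros Hy; unfold jacobiP.
  destruct (Rlt_dec (-1) y) as [H1|H1]; [destruct (Rlt_dec y 1) as [H2|H2]|].
  - apply jacobi_rod_explicit; auto.
  - destruct (Req_EM_T y 1) as [->|H3]; [|lra].
    rewrite (Lim_seq_ext _ (fun k => jacobi_explicit N a (1 - / INR (k + 2))))
      by (intros k; pose proof (inv_shift_bounds k); apply jacobi_rod_explicit; lra).
    apply Lim_seq_continuous; [apply continuity_pt_jacobi_explicit|].
    replace 1 with (1 - 0) at 1 by ring.
    apply is_lim_seq_minus'; [apply is_lim_seq_const | apply is_lim_seq_inv_shift].
  - destruct (Req_EM_T y (-1)) as [->|H3]; [|lra].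
    rewrite (Lim_seq_ext _ (fun k => jacobi_explicit N a (-1 + / INR (k + 2))))
      by (intros k; pose proof (inv_shift_bounds k); apply jacobi_rod_explicit; lra).
    apply Lim_seq_continuous; [apply continuity_pt_jacobi_explicit|].
    replace (-1) with (-1 + 0) at 1 by ring.
    apply is_lim_seq_plus'; [apply is_lim_seq_const | apply is_lim_seq_inv_shift].
Qed.

(** * [G^B_(d,q)] as an even polynomial and its derivative *)

Definition gb_weight (N : nat) (a : R) (l : nat) : R := binom N l * (-1) ^ l * rising (a + INR l) (N + 2).

Lemma gb_weight_gt N a l : (N < l)%nat -> gb_weight N a l = 0.
Proof. intros H; unfold gb_weight; rewrite binom_gt by auto; ring. Qed.

Definition gb_poly (N : nat) (a x : R) : R :=
  / INR (Factorial.fact (N + 2)) *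
  sum_f_R0 (fun l => gb_weight N a l * (x ^ (2 * l) - 2 * x ^ (2 * l + 2) + x ^ (2 * l + 4))) N.

Lemma jacobi_explicit_gb_poly N a x : jacobi_explicit N a (1 - 2 * x ^ 2) = gb_poly N a x.
Proof.
  unfold jacobi_explicit, gb_poly; rewrite <- !sum_f_R0_mult_l; apply sum_eq; intros l Hl.
  unfold gb_weight.
  replace (1 - (1 - 2 * x ^ 2)) with (2 * x ^ 2) by ring.
  replace (1 + (1 - 2 * x ^ 2)) with (2 * (1 - x ^ 2)) by ring.
  replace (2 ^ (N + 2)) with (2 ^ (N - l) * 2 ^ l * 4)
    by (rewrite <- pow_add; replace (N - l + l)%nat with N by lia; rewrite pow_add; ring).
  rewrite !Rpow_mult_distr, <- pow_mult, (pow_add x (2 * l) 2), (pow_add x (2 * l) 4).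
  assert (0 < INR (Factorial.fact (N + 2))) by apply INR_fact_lt_0.
  assert (0 < 2 ^ (N - l)) by (apply pow_lt; lra).
  assert (0 < 2 ^ l) by (apply pow_lt; lra).
  field; repeat split; lra.
Qed.

Definition GB_const (d q : nat) : R :=
  Gamma ((INR d + INR q) / 2) / (Rpower PI (INR d / 2) * Gamma (INR q / 2)).

Lemma div2_even N : ((2 * N + 2) / 2 = S N)%nat.
Proof. replace (2 * N + 2)%nat with (S N * 2)%nat by lia; apply Nat.div_mul; lia. Qed.

Lemma ind_le1_1 x : x <= 1 -> ind_le1 x = 1.
Proof. unfold ind_le1; destruct Rle_dec; lra. Qed.

Lemma ind_le1_0 x : 1 < x -> ind_le1 x = 0.
Proof. unfold ind_le1; destruct Rle_dec; lra. Qed.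

Lemma GB_gb_poly d N x : (1 <= d)%nat -> -1 <= x <= 1 ->
  GB d (2 * N + 2) x = GB_const d (2 * N + 2) * gb_poly N (INR d / 2) x.
Proof.
  intros Hd Hx; unfold GB; rewrite div2_even, ind_le1_1 by lra.
  replace (S N + 1)%nat with (N + 2)%nat by lia.
  assert (1 <= INR d) by (apply (le_INR 1); auto).
  assert (0 <= x ^ 2 <= 1) by (simpl; nra).
  rewrite jacobiP_explicit, jacobi_explicit_gb_poly by lra.
  unfold GB_const; ring.
Qed.

Lemma GB_gt_1 d q x : 1 < x -> GB d q x = 0.
Proof. intros H; unfold GB; rewrite ind_le1_0 by auto; ring. Qed.

Definition prev (f : nat -> R) (k : nat) : R := match k with O => 0 | S k' => f k' end.

Lemma sum_second_difference (f phi psi : nat -> R) N :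
  (forall l, (N < l)%nat -> f l = 0) -> psi O = 0 -> (forall k, psi (S k) = phi k) ->
  sum_f_R0 (fun k => (f (S k) - 2 * f k + prev f k) * phi k) (S N) =
  sum_f_R0 (fun l => f l * (psi l - 2 * phi l + phi (S l))) N.
Proof.
  intros Hf H0 HS.
  rewrite (sum_eq _ (fun k => (f (S k) * psi (S k) - 2 * (f k * phi k)) + prev f k * phi k))
    by (intros; rewrite HS; ring).
  rewrite (sum_eq (fun l => f l * (psi l - 2 * phi l + phi (S l)))
            (fun l => (f l * psi l - 2 * (f l * phi l)) + f l * phi (S l))) by (intros; ring).
  rewrite !sum_plus, !minus_sum.
  assert (A1 : sum_f_R0 (fun k => f (S k) * psi (S k)) (S N) = sum_f_R0 (fun l => f l * psi l) N).
  { assert (E := sum_f_R0_succ_l (fun l => f l * psi l) (S N)).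
    rewrite tech5, tech5, !Hf, H0 in E by lia; lra. }
  assert (A2 : sum_f_R0 (fun k => 2 * (f k * phi k)) (S N) = sum_f_R0 (fun l => 2 * (f l * phi l)) N)
    by (rewrite tech5, Hf by lia; ring).
  assert (A3 : sum_f_R0 (fun k => prev f k * phi k) (S N) = sum_f_R0 (fun l => f l * phi (S l)) N)
    by (rewrite sum_f_R0_succ_l; simpl prev; ring).
  rewrite A1, A2, A3; ring.
Qed.

Definition gb_coef (N : nat) (a : R) (k : nat) : R :=
  / INR (Factorial.fact (N + 2)) *
  (gb_weight N a (S k) - 2 * gb_weight N a k + prev (gb_weight N a) k) * INR (2 * k + 2).

Lemma is_derive_gb_poly N a x :
  is_derive (gb_poly N a) x (sum_f_R0 (fun k => gb_coef N a k * x ^ (2 * k + 1)) (S N)).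
Proof.
  set (phi := fun k : nat => INR (2 * k + 2) * x ^ (2 * k + 1)).
  set (psi := fun l : nat => INR (2 * l) * x ^ Nat.pred (2 * l)).
  replace (sum_f_R0 (fun k => gb_coef N a k * x ^ (2 * k + 1)) (S N)) with
    (/ INR (Factorial.fact (N + 2)) *
     sum_f_R0 (fun l => gb_weight N a l * (psi l - 2 * phi l + phi (S l))) N).
  2:{ rewrite <- sum_second_difference, <- sum_f_R0_mult_l.
      - apply sum_eq; intros; unfold gb_coef, phi; ring.
      - apply gb_weight_gt.
      - unfold psi; simpl; ring.
      - intros k; unfold psi, phi; f_equal; f_equal; lia. }
  apply is_derive_scal, is_derive_sum_f_R0; intros l _.
  unfold psi, phi; auto_derive; auto.
  replace (l + (l + 0))%nat with (2 * l)%nat by lia.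
  replace (Nat.pred (2 * l + 2)) with (2 * l + 1)%nat by lia.
  replace (Nat.pred (2 * l + 4)) with (2 * l + 3)%nat by lia.
  replace (2 * S l + 1)%nat with (2 * l + 3)%nat by lia.
  replace (2 * S l + 2)%nat with (2 * l + 4)%nat by lia.
  ring.
Qed.

Lemma gb_poly_factor N a u :
  gb_poly N a u = / INR (Factorial.fact (N + 2)) * (1 - u ^ 2) ^ 2 *
                  sum_f_R0 (fun l => gb_weight N a l * u ^ (2 * l)) N.
Proof.
  unfold gb_poly; rewrite Rmult_assoc; f_equal; rewrite <- sum_f_R0_mult_l.
  apply sum_eq; intros l _; rewrite !pow_add; ring.
Qed.

(* [x = 1] is a double root of [gb_poly]. *)
Lemma is_derive_gb_poly_1 N a : is_derive (gb_poly N a) 1 0.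
Proof.
  set (W := fun u => sum_f_R0 (fun l => gb_weight N a l * u ^ (2 * l)) N).
  destruct (ex_derive_sum_f_R0 (fun l u => gb_weight N a l * u ^ (2 * l)) N 1
              ltac:(intros; auto_derive; auto)) as [dW HW].
  apply (is_derive_ext (fun u => / INR (Factorial.fact (N + 2)) * (1 - u ^ 2) ^ 2 * W u));
    [intros; symmetry; apply gb_poly_factor|].
  replace 0 with ((/ INR (Factorial.fact (N + 2)) * (2 * (1 - 1 ^ 2) * (- 2 * 1))) * W 1
                  + (/ INR (Factorial.fact (N + 2)) * (1 - 1 ^ 2) ^ 2) * dW) by ring.
  apply (is_derive_mult (fun u => / INR (Factorial.fact (N + 2)) * (1 - u ^ 2) ^ 2) W);
    [auto_derive; auto; ring | exact HW | intros; apply Rmult_comm].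
Qed.

Lemma sum_gb_coef N a : sum_f_R0 (gb_coef N a) (S N) = 0.
Proof.
  assert (H := is_derive_unique _ _ _ (is_derive_gb_poly N a 1)).
  rewrite (is_derive_unique _ _ _ (is_derive_gb_poly_1 N a)) in H.
  rewrite H; apply sum_eq; intros; rewrite pow1; ring.
Qed.

Lemma is_derive_cutoff (f g : R -> R) x0 :
  is_derive f x0 0 -> f x0 = 0 -> g x0 = 0 ->
  locally x0 (fun u => g u = f u \/ g u = 0) -> is_derive g x0 0.
Proof.
  intros Hf Hf0 Hg0 [e0 Hloc]; apply is_derive_Reals; apply is_derive_Reals in Hf.
  intros eps Heps; destruct (Hf eps Heps) as [e He].
  exists (mkposreal _ (Rmin_pos _ _ (cond_pos e) (cond_pos e0))); intros h Hh0 Hh; simpl in Hh.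
  assert (Hball : ball x0 e0 (x0 + h))
    by (rewrite ball_R; replace (x0 + h - x0) with h by ring; eapply Rlt_le_trans; [exact Hh | apply Rmin_r]).
  rewrite Hg0; destruct (Hloc _ Hball) as [E|E]; rewrite E.
  - replace (f (x0 + h) - 0) with (f (x0 + h) - f x0) by (rewrite Hf0; ring).
    apply He; auto; eapply Rlt_le_trans; [exact Hh | apply Rmin_l].
  - replace ((0 - 0) / h - 0) with 0 by (field; auto); rewrite Rabs_R0; lra.
Qed.

Definition GB_coef (d N : nat) (k : nat) : R := GB_const d (2 * N + 2) * gb_coef N (INR d / 2) k.

Lemma podd_GB_coef d N x : podd (2 * N + 2) (GB_coef d N) x =
  GB_const d (2 * N + 2) * sum_f_R0 (fun k => gb_coef N (INR d / 2) k * x ^ (2 * k + 1)) (S N).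
Proof. unfold podd; rewrite div2_even, <- sum_f_R0_mult_l; apply sum_eq; intros; unfold GB_coef; ring. Qed.

Lemma is_derive_GB d N x : (1 <= d)%nat -> 0 <= x ->
  is_derive (GB d (2 * N + 2)) x (pbar (2 * N + 2) (GB_coef d N) x).
Proof.
  intros Hd Hx; unfold pbar; rewrite podd_GB_coef.
  set (K := GB_const d (2 * N + 2)); set (a := INR d / 2).
  destruct (Rlt_le_dec x 1) as [H1|H1]; [|destruct (Req_dec x 1) as [->|H2]].
  - rewrite ind_le1_1, Rmult_1_r by lra.
    apply is_derive_ext_loc with (fun u => K * gb_poly N a u).
    + generalize (open_and _ _ (open_gt (-1)) (open_lt 1) x ltac:(lra)); apply filter_imp.
      intros u Hu; symmetry; apply GB_gb_poly; auto; lra.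
    + apply is_derive_scal, is_derive_gb_poly.
  - rewrite ind_le1_1 by lra.
    replace (K * _ * 1) with 0 by (rewrite (sum_eq _ (gb_coef N a)), sum_gb_coef;
                                   [ring | intros; rewrite pow1; ring]).
    assert (Hp1 : gb_poly N a 1 = 0) by (rewrite gb_poly_factor; ring).
    apply (is_derive_cutoff (fun u => K * gb_poly N a u)).
    + replace 0 with (K * 0) by ring; apply is_derive_scal, is_derive_gb_poly_1.
    + rewrite Hp1; ring.
    + rewrite GB_gb_poly by (auto; lra); fold K a; rewrite Hp1; ring.
    + generalize (open_gt 0 1 Rlt_0_1); apply filter_imp; intros u Hu.
      destruct (Rle_dec u 1); [left; apply GB_gb_poly; auto; lra | right; apply GB_gt_1; lra].
  - rewrite ind_le1_0, Rmult_0_r by lra.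
    apply is_derive_ext_loc with (fun _ => 0); [|apply (is_derive_const 0)].
    generalize (open_gt 1 x ltac:(lra)); apply filter_imp; intros u Hu; symmetry; apply GB_gt_1, Hu.
Qed.

Lemma is_RInt_gen_pbar (p q : nat) (c : nat -> R) :
  is_RInt_gen (fun x => x ^ p * pbar q c x) (at_point 0) (Rbar_locally p_infty)
    (sum_f_R0 (fun k => c k / INR (p + (2 * k + 1) + 1)) (q / 2)).
Proof.
  set (V := sum_f_R0 (fun k => c k / INR (p + (2 * k + 1) + 1)) (q / 2)).
  assert (H01 : is_RInt (fun x => x ^ p * pbar q c x) 0 1 V).
  { apply is_RInt_ext with (fun x => sum_f_R0 (fun k => c k * x ^ (p + (2 * k + 1))) (q / 2)).
    - intros x Hx; rewrite Rmin_left, Rmax_right in Hx by lra.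
      unfold pbar, podd; rewrite ind_le1_1, Rmult_1_r, Rmult_comm, sum_f_R0_mult_r by lra.
      apply sum_eq; intros; rewrite pow_add; ring.
    - apply is_RInt_sum_f_R0; intros; apply is_RInt_monomial. }
  apply filterlimi_lim_ext_loc with (fun _ => V); [|apply filterlim_const].
  apply (Filter_prod _ _ _ (fun x => x = 0) (fun y => 1 < y)); [reflexivity | exists 1; auto|].
  intros x b -> Hb; simpl; replace V with (plus V 0) by (unfold plus; simpl; ring).
  apply (is_RInt_Chasles (V:=R_NormedModule)) with 1; auto.
  apply is_RInt_ext with (fun _ => 0).
  - intros y Hy; rewrite Rmin_left, Rmax_right in Hy by lra.
    unfold pbar; rewrite ind_le1_0 by lra; change (@eq R 0 (y ^ p * (podd q c y * 0))); ring.
  - assert (HC : is_RInt (fun _ => 0) 1 b ((b - 1) * 0))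
      by exact (is_RInt_const (V:=R_NormedModule) 1 b 0).
    rewrite Rmult_0_r in HC; exact HC.
Qed.

Lemma RInt_gen_pbar (p q : nat) (c : nat -> R) :
  RInt_gen (fun x => x ^ p * pbar q c x) (at_point 0) (Rbar_locally p_infty) =
  sum_f_R0 (fun k => c k / INR (p + (2 * k + 1) + 1)) (q / 2).
Proof. apply (is_RInt_gen_unique (V:=R_CompleteNormedModule)), is_RInt_gen_pbar. Qed.

Lemma B_pbar d N c j : (1 <= d)%nat ->
  B_ d (2 * j + 1) (pbar (2 * N + 2) c) =
  sum_f_R0 (fun k => c k / (INR d + 2 * INR j + 2 * INR k + 2)) (S N).
Proof.
  intros Hd; unfold B_; rewrite RInt_gen_pbar, div2_even; apply sum_eq; intros k _.
  replace (d - 1 + (2 * j + 1) + (2 * k + 1) + 1)%nat with (d + 2 * j + 2 * k + 2)%nat by lia.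
  rewrite !plus_INR, !mult_INR; simpl INR; f_equal; ring.
Qed.

(* The second difference in [gb_coef] is moved onto the weights
   [(2k+2)/(D+2k+2)], whose second difference is [-8D/((D+2l)(D+2l+2)(D+2l+4))]. *)
Lemma sum_GB_coef_moment d N j : (1 <= d)%nat ->
  sum_f_R0 (fun k => GB_coef d N k / (INR d + 2 * INR j + 2 * INR k + 2)) (S N) =
  - (INR d + 2 * INR j) * GB_const d (2 * N + 2) / INR (Factorial.fact (N + 2)) *
  moment_sum (INR d / 2) N j.
Proof.
  intros Hd; assert (Hd1 : 1 <= INR d) by (apply (le_INR 1); auto).
  set (a := INR d / 2); set (D := INR d + 2 * INR j).
  assert (HD : 1 <= D) by (unfold D; pose proof (pos_INR j); lra).
  set (phi := fun k : nat => INR (2 * k + 2) / (D + 2 * INR k + 2)).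
  set (psi := fun l : nat => INR (2 * l) / (D + 2 * INR l)).
  transitivity (GB_const d (2 * N + 2) / INR (Factorial.fact (N + 2)) *
     sum_f_R0 (fun k => (gb_weight N a (S k) - 2 * gb_weight N a k + prev (gb_weight N a) k) * phi k) (S N)).
  { rewrite <- sum_f_R0_mult_l; apply sum_eq; intros k _.
    unfold GB_coef, gb_coef, phi, D; fold a; unfold Rdiv; ring. }
  rewrite (sum_second_difference _ phi psi);
    [| apply gb_weight_gt | unfold psi; simpl; unfold Rdiv; ring
     | intros k; unfold psi, phi; replace (2 * S k)%nat with (2 * k + 2)%nat by lia;
       rewrite S_INR; f_equal; ring].
  unfold moment_sum, altsum; rewrite <- !sum_f_R0_mult_l; apply sum_eq; intros l _.
  unfold psi, phi, gb_weight.
  assert (Hl := pos_INR l); assert (Hj := pos_INR j).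
  assert (Ha : INR d = 2 * a) by (unfold a; field).
  assert (Hfact := INR_fact_neq_0 (N + 2)).
  unfold D; rewrite Ha in *; rewrite !plus_INR, !mult_INR, !S_INR; simpl INR.
  field; repeat split; lra.
Qed.

Lemma B_GB_coef d N j : (1 <= d)%nat ->
  B_ d (2 * j + 1) (pbar (2 * N + 2) (GB_coef d N)) =
  - (INR d + 2 * INR j) * GB_const d (2 * N + 2) / INR (Factorial.fact (N + 2)) *
  moment_sum (INR d / 2) N j.
Proof. intros Hd; rewrite B_pbar by auto; apply sum_GB_coef_moment, Hd. Qed.

(** * Uniqueness *)

Lemma poly_coeffs_zero N (t : nat -> R) :
  (forall u, 0 < u < 1 -> sum_f_R0 (fun j => t j * u ^ j) N = 0) ->
  forall j, (j <= N)%nat -> t j = 0.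
Proof.
  revert t; induction N as [|N IH]; intros t H j Hj.
  - replace j with O by lia; specialize (H (1/2) ltac:(lra)); simpl in H; lra.
  - set (p := fun u => sum_f_R0 (fun j => t j * u ^ j) (S N)).
    assert (Ht0 : t O = 0).
    { assert (Hc : continuity_pt p 0).
      { apply continuity_pt_filterlim, (ex_derive_continuous p), ex_derive_sum_f_R0.
        intros; auto_derive; auto. }
      assert (E := Lim_seq_continuous p _ 0 Hc is_lim_seq_inv_shift).
      rewrite (Lim_seq_ext _ (fun _ => 0)), Lim_seq_const in E
        by (intros k; apply H, inv_shift_bounds).
      unfold p in E; rewrite sum_f_R0_succ_l, sum_eq_R0 in E by (intros; simpl; ring).
      simpl in E; lra. }
    destruct j as [|j]; auto.
    apply (IH (fun j => t (S j))); [|lia].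
    intros u Hu; specialize (H u Hu); rewrite sum_f_R0_succ_l, Ht0 in H.
    rewrite (sum_eq _ (fun j => u * (t (S j) * u ^ j))), sum_f_R0_mult_l in H by (intros; simpl; ring).
    apply (Rmult_eq_reg_l u); lra.
Qed.

Lemma continuous_nonneg_RInt_0 (f : R -> R) :
  (forall x, 0 <= x <= 1 -> continuous f x) -> (forall x, 0 < x < 1 -> 0 <= f x) ->
  is_RInt f 0 1 0 -> forall x, 0 < x < 1 -> f x = 0.
Proof.
  intros Hc Hp HI x0 Hx0.
  destruct (Rle_lt_or_eq_dec 0 (f x0) (Hp x0 Hx0)) as [Hlt|]; [exfalso|auto].
  assert (Hhalf : 0 < f x0 / 2) by lra.
  destruct (proj1 (filterlim_locally (F:=locally x0) f (f x0)) (Hc x0 ltac:(lra))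
              (mkposreal _ Hhalf)) as [e He].
  set (r := Rmin (e / 2) (Rmin (x0 / 2) ((1 - x0) / 2))).
  assert (Hr : 0 < r) by (unfold r; repeat apply Rmin_pos; try lra; destruct e; simpl; lra).
  assert (Hr1 : r <= e / 2) by apply Rmin_l.
  assert (Hr2 : r <= x0 / 2) by (eapply Rle_trans; [apply Rmin_r | apply Rmin_l]).
  assert (Hr3 : r <= (1 - x0) / 2) by (eapply Rle_trans; [apply Rmin_r | apply Rmin_r]).
  assert (Hex : forall u v, 0 <= u <= v -> v <= 1 -> ex_RInt f u v).
  { intros u v Huv Hv; apply (ex_RInt_continuous (V:=R_CompleteNormedModule)); intros z Hz.
    rewrite Rmin_left, Rmax_right in Hz by lra; apply Hc; lra. }
  assert (I1 : 0 <= RInt f 0 (x0 - r))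
    by (apply RInt_ge_0; [lra | apply Hex; lra | intros; apply Hp; lra]).
  assert (I3 : 0 <= RInt f (x0 + r) 1)
    by (apply RInt_ge_0; [lra | apply Hex; lra | intros; apply Hp; lra]).
  assert (I2 : 0 < RInt f (x0 - r) (x0 + r)).
  { apply RInt_gt_0; [lra | | intros; apply Hc; lra].
    intros x Hx; assert (Bx : ball x0 e x) by (rewrite ball_R; apply Rabs_def1; lra).
    specialize (He x Bx); rewrite ball_R in He; apply Rabs_def2 in He; simpl in He; lra. }
  assert (C1 : RInt f 0 (x0 - r) + RInt f (x0 - r) (x0 + r) = RInt f 0 (x0 + r))
    by exact (RInt_Chasles (V:=R_CompleteNormedModule) f _ _ _ (Hex 0 (x0 - r) ltac:(lra) ltac:(lra))
                (Hex (x0 - r) (x0 + r) ltac:(lra) ltac:(lra))).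
  assert (C2 : RInt f 0 (x0 + r) + RInt f (x0 + r) 1 = RInt f 0 1)
    by exact (RInt_Chasles (V:=R_CompleteNormedModule) f _ _ _ (Hex 0 (x0 + r) ltac:(lra) ltac:(lra))
                (Hex (x0 + r) 1 ltac:(lra) ltac:(lra))).
  rewrite (is_RInt_unique _ _ _ _ HI) in C2; lra.
Qed.

Lemma sum_by_parts (tau g : nat -> R) N : tau (S N) = 0 ->
  sum_f_R0 (fun k => (tau k - prev tau k) * g k) (S N) = sum_f_R0 (fun k => tau k * (g k - g (S k))) N.
Proof.
  intros H.
  rewrite (sum_eq _ (fun k => tau k * g k - prev tau k * g k)) by (intros; ring).
  rewrite (sum_eq (fun k => tau k * (g k - g (S k))) (fun k => tau k * g k - tau k * g (S k)))
    by (intros; ring).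
  rewrite !minus_sum, tech5, H, (sum_f_R0_succ_l (fun k => prev tau k * g k)); simpl prev; ring.
Qed.

Definition even_poly (t : nat -> R) (N : nat) (x : R) : R := sum_f_R0 (fun k => t k * x ^ (2 * k)) N.

Lemma is_RInt_even_poly_moment m N (t : nat -> R) :
  is_RInt (fun x => x ^ m * (1 - x ^ 2) * even_poly t N x) 0 1
    (sum_f_R0 (fun k => t k * (/ INR (m + 2 * k + 1) - / INR (m + 2 * k + 3))) N).
Proof.
  apply is_RInt_ext with (fun x => sum_f_R0 (fun k => t k * x ^ (m + 2 * k) - t k * x ^ (m + 2 * k + 2)) N).
  - intros x _; unfold even_poly; rewrite Rmult_comm, sum_f_R0_mult_r; apply sum_eq; intros k _.
    rewrite !pow_add; ring.
  - apply is_RInt_sum_f_R0; intros k _.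
    replace (t k * (/ INR (m + 2 * k + 1) - / INR (m + 2 * k + 3)))
      with (t k / INR (m + 2 * k + 1) - t k / INR (m + 2 * k + 2 + 1))
      by (replace (m + 2 * k + 2 + 1)%nat with (m + 2 * k + 3)%nat by lia; field;
          split; apply not_0_INR; lia).
    apply (is_RInt_minus (V:=R_NormedModule)); apply is_RInt_monomial.
Qed.

(* Testing against [even_poly t N] itself: [x^m (1 - x^2) P(x)^2] has zero
   integral over [[0, 1]], hence [P] vanishes there. *)
Lemma even_poly_orthogonal_0 m N (t : nat -> R) :
  (forall j, (j <= N)%nat -> is_RInt (fun x => x ^ (m + 2 * j) * (1 - x ^ 2) * even_poly t N x) 0 1 0) ->
  forall j, (j <= N)%nat -> t j = 0.
Proof.
  intros Horth; set (P := even_poly t N).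
  assert (Hsq : is_RInt (fun x => x ^ m * (1 - x ^ 2) * P x ^ 2) 0 1 0).
  { apply is_RInt_ext with (fun x => sum_f_R0 (fun j => t j * (x ^ (m + 2 * j) * (1 - x ^ 2) * P x)) N).
    - intros x _; match goal with |- ?u = ?v => change (@eq R u v) end.
      transitivity (P x * (x ^ m * (1 - x ^ 2) * P x)); [|ring].
      unfold P at 2, even_poly; rewrite sum_f_R0_mult_r; apply sum_eq; intros; rewrite !pow_add; ring.
    - assert (H : is_RInt (fun x => sum_f_R0 (fun j => t j * (x ^ (m + 2 * j) * (1 - x ^ 2) * P x)) N)
                    0 1 (sum_f_R0 (fun j => t j * 0) N)).
      { apply is_RInt_sum_f_R0; intros j Hj; apply (is_RInt_scal (V:=R_NormedModule)), Horth, Hj. }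
      rewrite sum_eq_R0 in H by (intros; ring); exact H. }
  assert (HP : forall x, 0 < x < 1 -> P x = 0).
  { intros x Hx.
    assert (Hw : 0 < x ^ m * (1 - x ^ 2)) by (apply Rmult_lt_0_compat; [apply pow_lt | simpl]; nra).
    assert (Hx0 : x ^ m * (1 - x ^ 2) * P x ^ 2 = 0).
    { apply (continuous_nonneg_RInt_0 (fun x => x ^ m * (1 - x ^ 2) * P x ^ 2)); auto.
      - intros y _; apply (ex_derive_continuous (fun x => x ^ m * (1 - x ^ 2) * P x ^ 2)).
        apply (ex_derive_mult (fun x => x ^ m * (1 - x ^ 2))); [auto_derive; auto|].
        apply (ex_derive_pow P 2 y), ex_derive_sum_f_R0; intros; auto_derive; auto.
      - intros y Hy; apply Rmult_le_pos; [apply Rmult_le_pos; [apply pow_le | simpl] | ]; nra. }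
    apply Rmult_integral in Hx0; destruct Hx0; nra. }
  apply poly_coeffs_zero; intros u Hu.
  assert (Hs2 : sqrt u ^ 2 = u) by (rewrite <- Rsqr_pow2; apply Rsqr_sqrt; lra).
  assert (Hsu : 0 < sqrt u < 1)
    by (split; [apply sqrt_lt_R0 | rewrite <- sqrt_1; apply sqrt_lt_1_alt]; lra).
  rewrite <- (HP (sqrt u) Hsu); unfold P, even_poly; apply sum_eq; intros j _.
  rewrite pow_mult, Hs2; reflexivity.
Qed.

Lemma is_RInt_moment_partial_sums d N (delta : nat -> R) j : sum_f_R0 delta (S N) = 0 ->
  is_RInt (fun x => x ^ (d + 1 + 2 * j) * (1 - x ^ 2) * even_poly (sum_f_R0 delta) N x) 0 1
    (sum_f_R0 (fun k => delta k / (INR d + 2 * INR j + 2 * INR k + 2)) (S N)).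
Proof.
  intros Hs; set (tau := sum_f_R0 delta).
  rewrite (sum_eq _ (fun k => (tau k - prev tau k) * / (INR d + 2 * INR j + 2 * INR k + 2)))
    by (intros [|k] _; unfold tau; simpl; unfold Rdiv; ring).
  rewrite sum_by_parts by exact Hs.
  match goal with |- is_RInt _ _ _ (sum_f_R0 ?F N) =>
    rewrite (sum_eq F (fun k => tau k * (/ INR (d + 1 + 2 * j + 2 * k + 1) -
                                         / INR (d + 1 + 2 * j + 2 * k + 3))) N) end;
    [apply is_RInt_even_poly_moment|].
  intros k _; rewrite !plus_INR, !mult_INR, S_INR; simpl INR.
  apply Rmult_eq_compat_l; f_equal; f_equal; ring.
Qed.

Lemma moment_system_unique d N (delta : nat -> R) :
  (forall j, (j <= N)%nat ->
     sum_f_R0 (fun k => delta k / (INR d + 2 * INR j + 2 * INR k + 2)) (S N) = 0) ->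
  sum_f_R0 delta (S N) = 0 -> forall k, (k <= S N)%nat -> delta k = 0.
Proof.
  intros Hm Hs.
  assert (Htau : forall j, (j <= N)%nat -> sum_f_R0 delta j = 0).
  { apply (even_poly_orthogonal_0 (d + 1) N); intros j Hj.
    assert (H := is_RInt_moment_partial_sums d N delta j Hs).
    rewrite (Hm j Hj) in H; exact H. }
  intros [|k] Hk.
  - apply (Htau 0%nat); lia.
  - assert (Hsk : sum_f_R0 delta (S k) = 0)
      by (destruct (Nat.eq_dec k N) as [->|]; [exact Hs | apply Htau; lia]).
    rewrite tech5, (Htau k) in Hsk by lia; lra.
Qed.

(** * The moment conditions *)

Lemma GB_const_eq d N : (1 <= d)%nat ->
  GB_const d (2 * N + 2) =
  Gamma (INR d / 2) * (INR d / 2 * rising (INR d / 2) N) / (Rpower PI (INR d / 2) * INR (Factorial.fact N)).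
Proof.
  intros Hd; assert (1 <= INR d) by (apply (le_INR 1); auto).
  unfold GB_const.
  replace ((INR d + INR (2 * N + 2)) / 2) with (INR d / 2 + INR (S N))
    by (rewrite plus_INR, mult_INR, S_INR; simpl INR; field).
  replace (INR (2 * N + 2) / 2) with (INR (S N))
    by (rewrite plus_INR, mult_INR, S_INR; simpl INR; field).
  rewrite Gamma_add_nat, Gamma_nat by (auto using Gamma_converges_half_nat; lra).
  reflexivity.
Qed.

Lemma GB_const_pos d N : (1 <= d)%nat -> 0 < GB_const d (2 * N + 2).
Proof.
  intros Hd; assert (1 <= INR d) by (apply (le_INR 1); auto).
  rewrite GB_const_eq by auto.
  assert (0 < Gamma (INR d / 2)) by (apply Gamma_pos, Gamma_converges_half_nat, Hd).
  assert (0 < rising (INR d / 2) N) by (apply rising_pos; lra).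
  assert (0 < Rpower PI (INR d / 2)) by apply Rpower_pos.
  assert (0 < INR (Factorial.fact N)) by apply INR_fact_lt_0.
  apply Rdiv_lt_0_compat; apply Rmult_lt_0_compat; try apply Rmult_lt_0_compat; lra.
Qed.

Lemma B_GB_coef_1 d N : (1 <= d)%nat -> B_ d 1 (pbar (2 * N + 2) (GB_coef d N)) = - INR d / b_ d.
Proof.
  intros Hd; assert (1 <= INR d) by (apply (le_INR 1); auto).
  change 1%nat with (2 * 0 + 1)%nat; rewrite B_GB_coef, moment_sum_0, GB_const_eq by (auto; lra).
  rewrite rising_2; replace (S (S N)) with (N + 2)%nat by lia.
  assert (0 < rising (INR d / 2) N) by (apply rising_pos; lra).
  assert (0 < Gamma (INR d / 2)) by (apply Gamma_pos, Gamma_converges_half_nat, Hd).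
  assert (0 < Rpower PI (INR d / 2)) by apply Rpower_pos.
  pose proof (INR_fact_lt_0 N); pose proof (INR_fact_lt_0 (N + 2)).
  unfold b_; simpl INR; field; repeat split; lra.
Qed.

Lemma B_GB_coef_mid d N j : (1 <= d)%nat -> (1 <= j <= N)%nat ->
  B_ d (2 * j + 1) (pbar (2 * N + 2) (GB_coef d N)) = 0.
Proof.
  intros Hd Hj; assert (1 <= INR d) by (apply (le_INR 1); auto).
  rewrite B_GB_coef, moment_sum_mid by (auto; lra || lia); ring.
Qed.

Lemma B_GB_coef_last d N : (1 <= d)%nat -> B_ d (2 * S N + 1) (pbar (2 * N + 2) (GB_coef d N)) <> 0.
Proof.
  intros Hd; assert (1 <= INR d) by (apply (le_INR 1); auto).
  rewrite B_GB_coef, moment_sum_last by (auto; lra).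
  assert (0 < GB_const d (2 * N + 2)) by (apply GB_const_pos, Hd).
  assert (rising (- (INR N + 3)) N <> 0)
    by (apply rising_neq0; intros t Ht; assert (INR t <= INR N) by (apply le_INR; lia); lra).
  assert (0 < rising (INR d / 2 + INR N + 3) N) by (apply rising_pos; pose proof (pos_INR N); lra).
  pose proof (pos_INR N); pose proof (pos_INR (S N)); pose proof (INR_fact_lt_0 N);
    pose proof (INR_fact_lt_0 (N + 2)).
  set (K := GB_const d (2 * N + 2)) in *; clearbody K.
  unfold Rdiv; repeat apply Rmult_integral_contrapositive_currified;
    try apply Rinv_neq_0_compat; try apply Rmult_integral_contrapositive_currified; auto; lra.
Qed.

Lemma in_M_GB_coef d N : (1 <= d)%nat -> in_M d (2 * N + 2) (pbar (2 * N + 2) (GB_coef d N)).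
Proof.
  intros Hd; split; [apply B_GB_coef_1, Hd | split].
  - intros i [j ->] Hi; apply B_GB_coef_mid; auto; lia.
  - replace (2 * N + 2 + 1)%nat with (2 * S N + 1)%nat by lia; apply B_GB_coef_last, Hd.
Qed.

Lemma podd_1 q c : podd q c 1 = sum_f_R0 c (q / 2).
Proof. unfold podd; apply sum_eq; intros; rewrite pow1; ring. Qed.

Lemma podd_GB_coef_1 d N : podd (2 * N + 2) (GB_coef d N) 1 = 0.
Proof.
  rewrite podd_1, div2_even; unfold GB_coef; rewrite sum_f_R0_mult_l, sum_gb_coef; ring.
Qed.

Lemma GB_coef_unique d N (c : nat -> R) : (1 <= d)%nat ->
  in_M d (2 * N + 2) (pbar (2 * N + 2) c) -> podd (2 * N + 2) c 1 = 0 ->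
  forall k, (k <= S N)%nat -> c k = GB_coef d N k.
Proof.
  intros Hd [HB1 [HBmid _]] H1 k Hk.
  enough (c k - GB_coef d N k = 0) by lra.
  revert k Hk; apply (moment_system_unique d N).
  - intros j Hj.
    rewrite (sum_eq _ (fun k => c k / (INR d + 2 * INR j + 2 * INR k + 2) -
                               GB_coef d N k / (INR d + 2 * INR j + 2 * INR k + 2)))
      by (intros; unfold Rdiv; ring).
    rewrite minus_sum, <- !B_pbar by auto.
    destruct j as [|j].
    + change (2 * 0 + 1)%nat with 1%nat; rewrite HB1, B_GB_coef_1 by auto; ring.
    + rewrite HBmid, B_GB_coef_mid by (auto; try (exists (S j); lia); lia); ring.
  - rewrite minus_sum, <- (div2_even N), <- !podd_1, H1, podd_GB_coef_1; ring.
Qed.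

Theorem lemmaB13 (d q : nat) (hd : (1 <= d)%nat) (hq : (2 <= q)%nat) (hev : Nat.Even q) :
  exists (C : R) (c : nat -> R),
    (C <> 0 /\ in_M d q (pbar q c) /\
     RInt_gen (fun x => x ^ (d + q) * pbar q c x) (at_point 0) (Rbar_locally p_infty) = C /\
     podd q c 1 = 0) /\
    (forall (C' : R) (c' : nat -> R),
       C' <> 0 -> in_M d q (pbar q c') ->
       RInt_gen (fun x => x ^ (d + q) * pbar q c' x) (at_point 0) (Rbar_locally p_infty) = C' ->
       podd q c' 1 = 0 ->
       C' = C /\ (forall k : nat, (k <= q / 2)%nat -> c' k = c k)) /\
    (forall x : R, 0 <= x -> is_derive (GB d q) x (pbar q c x)).
Proof.
  destruct hev as [[|N] Hq]; [lia|].
  replace q with (2 * N + 2)%nat in * by lia; clear Hq hq.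
  set (c := GB_coef d N).
  assert (HC : RInt_gen (fun x => x ^ (d + (2 * N + 2)) * pbar (2 * N + 2) c x)
                 (at_point 0) (Rbar_locally p_infty) = B_ d (2 * S N + 1) (pbar (2 * N + 2) c))
    by (unfold B_; replace (d - 1 + (2 * S N + 1))%nat with (d + (2 * N + 2))%nat by lia; reflexivity).
  exists (B_ d (2 * S N + 1) (pbar (2 * N + 2) c)), c; split; [|split].
  - split; [apply B_GB_coef_last, hd | split; [apply in_M_GB_coef, hd | split; [exact HC|]]].
    apply podd_GB_coef_1.
  - intros C' c' _ HM' <- H1'.
    assert (Hc' := GB_coef_unique d N c' hd HM' H1'); rewrite div2_even; split; [|exact Hc'].
    rewrite <- HC, !RInt_gen_pbar, div2_even; apply sum_eq; intros k Hk; rewrite Hc' by auto; reflexivity.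
  - intros x Hx; apply is_derive_GB; auto.
Qed.
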